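(* Let $a_1,\dots,a_n\in\mathbb{R}^d$ be nonzero vectors. Let $a'_1,\dots,a'_{n'}$ be a second list obtained from the first by either adding one nonzero vector or removing one vector. Fix $T\ge1$, points $x^{(1)},\dots,x^{(T)}\in\mathbb{R}^d$, and a vector $g\in\mathbb{R}^d$. For the first list and each $t\in[T]$, define - $S^{(t)}=\{i:\langle\overline{a}_i,x^{(t)}\rangle\le0\}$ and $m^{(t)}=|S^{(t)}|$, where we assume $m^{(t)}\ge1$; - $\overline{\lambda}_i=\frac1T\sum_{t=1}^T\frac{\mathbf{1}[i\in S^{(t)}]}{m^{(t)}}$ for each $i$; - $P=\{i:\langle\overline{a}_i,g\rangle\ge0\}$ and $c=\sum_{i\in P}\overline{\lambda}_i\overline{a}_i$. Define $S'^{(t)}$, $m'^{(t)}$, $\overline{\lambda}'$, $P'$ and $c'$ in the same way from the second list, with the same $x^{(1)},\dots,x^{(T)}$ and $g$, and assume $m'^{(t)}\ge1$ for all $t$. Let $m=\min_{t\in[T]}\min(m^{(t)},m'^{(t)})$. Then $\|c-c'\|_2\le\frac{2}{m}$.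
   Context: For a nonzero vector $a$, $\overline{a}=a/\|a\|_2$. $\mathbf{1}[\cdot]$ denotes the indicator function. *)

From HB Require Import structures.
From mathcomp Require Import all_boot all_order all_algebra.
Set Implicit Arguments. Unset Strict Implicit. Unset Printing Implicit Defensive.
Import Order.TTheory GRing.Theory Num.Theory.
Local Open Scope ring_scope.

Section Defs.
Variables (R : rcfType) (d : nat).

Definition dotv (u v : 'rV[R]_d) : R := \sum_(j < d) u 0 j * v 0 j.
Definition norm2 (u : 'rV[R]_d) : R := Num.sqrt (dotv u u).
Definition unitv (u : 'rV[R]_d) : 'rV[R]_d := (norm2 u)^-1 *: u.

Definition vec (a : seq 'rV[R]_d) (i : 'I_(size a)) : 'rV[R]_d := nth 0 a i.

Definition Sset (a : seq 'rV[R]_d) (x : 'rV[R]_d) : {set 'I_(size a)} :=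
  [set i | dotv (unitv (vec i)) x <= 0].

Definition lambar (a : seq 'rV[R]_d) (T : nat) (xs : 'I_T -> 'rV[R]_d)
  (i : 'I_(size a)) : R :=
  T%:R^-1 * \sum_(t < T) ((i \in Sset a (xs t))%:R / (#|Sset a (xs t)|)%:R).

Definition Pset (a : seq 'rV[R]_d) (g : 'rV[R]_d) : {set 'I_(size a)} :=
  [set i | 0 <= dotv (unitv (vec i)) g].

Definition cvec (a : seq 'rV[R]_d) (T : nat) (xs : 'I_T -> 'rV[R]_d)
  (g : 'rV[R]_d) : 'rV[R]_d :=
  \sum_(i in Pset a g) lambar xs i *: unitv (vec i).

Definition neighbor (a a' : seq 'rV[R]_d) : Prop :=
  (exists k (v : 'rV[R]_d), v != 0 /\ a' = take k a ++ v :: drop k a)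
  \/ (exists2 k, (k < size a)%N & a' = take k a ++ drop k.+1 a).

End Defs.

From HB Require Import structures.
From mathcomp Require Import all_boot all_order all_algebra.
From mathcomp Require Import ring lra.
Import Order.TTheory GRing.Theory Num.Theory.
Local Open Scope ring_scope.

(* Up to reordering, one of the two lists is the other one with a vector w prepended,
   and c = (1/T) Σ_t c^(t) where c^(t) is the sum of the unit vectors in P ∩ S^(t)
   divided by m^(t).  For a single t, either w is not in S^(t) and c^(t) does not
   change, or a sum B of k >= m unit vectors (so |B| <= k) is replaced by B + z with
   |z| <= 1, and |(B + z)/(k+1) - B/k| <= 1/(k+1) + |B| (1/k - 1/(k+1)) <= 2/(k+1) < 2/m.
   Averaging over t preserves the bound. *)

Section EuclideanNorm.
Context {R : rcfType} {d : nat}.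
Implicit Types u v : 'rV[R]_d.

Lemma dotvC u v : dotv u v = dotv v u.
Proof. by apply: eq_bigr => j _; rewrite mulrC. Qed.

Lemma dotv0l v : dotv 0 v = 0.
Proof. by rewrite /dotv big1 // => j _; rewrite mxE mul0r. Qed.

Lemma dotv_ge0 u : 0 <= dotv u u.
Proof. by apply: sumr_ge0 => j _; rewrite -expr2 sqr_ge0. Qed.

Lemma dotv_eq0 u : (dotv u u == 0) = (u == 0).
Proof.
apply/idP/eqP => [|->]; last by rewrite dotv0l.
rewrite psumr_eq0 => [/allP u0|j _]; last by rewrite -expr2 sqr_ge0.
apply/rowP => j; rewrite mxE; apply/eqP.
by have /implyP/(_ isT) := u0 j (mem_index_enum _); rewrite mulf_eq0 orbb.
Qed.

Lemma dotv_lincomb p q u v : dotv (p *: u + q *: v) (p *: u + q *: v) =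
  p ^+ 2 * dotv u u + 2 * p * q * dotv u v + q ^+ 2 * dotv v v.
Proof.
rewrite /dotv !mulr_sumr -!big_split /=.
by apply: eq_bigr => j _; rewrite !mxE; ring.
Qed.

Lemma norm2_ge0 u : 0 <= norm2 u.
Proof. exact: sqrtr_ge0. Qed.

Lemma norm2_sq u : norm2 u ^+ 2 = dotv u u.
Proof. by rewrite sqr_sqrtr // dotv_ge0. Qed.

Lemma norm2_gt0 u : (0 < norm2 u) = (u != 0).
Proof. by rewrite sqrtr_gt0 lt0r dotv_eq0 dotv_ge0 andbT. Qed.

Lemma norm20 : norm2 (0 : 'rV[R]_d) = 0.
Proof. by rewrite /norm2 dotv0l sqrtr0. Qed.

Lemma norm2_le u c : 0 <= c -> dotv u u <= c ^+ 2 -> norm2 u <= c.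
Proof. by move=> c0 uc; rewrite /norm2 -(ger0_norm c0) -sqrtr_sqr ler_wsqrtr. Qed.

Lemma dotv_le_norm2 u v : dotv u v <= norm2 u * norm2 v.
Proof.
have [->|u0] := eqVneq u 0; first by rewrite dotv0l norm20 mul0r.
have [->|v0] := eqVneq v 0; first by rewrite dotvC dotv0l norm20 mulr0.
rewrite -norm2_gt0 in u0; rewrite -norm2_gt0 in v0.
have := dotv_ge0 (norm2 v *: u + (- norm2 u) *: v).
rewrite dotv_lincomb -!norm2_sq.
have : 0 < norm2 u * norm2 v by rewrite mulr_gt0.
nra.
Qed.

Lemma norm2D_le u v : norm2 (u + v) <= norm2 u + norm2 v.
Proof.
apply: norm2_le; first by rewrite addr_ge0 ?norm2_ge0.
have := dotv_lincomb 1 1 u v; rewrite !scale1r => ->.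
have := dotv_le_norm2 u v; rewrite -!norm2_sq; nra.
Qed.

Lemma norm2Z k u : norm2 (k *: u) = `|k| * norm2 u.
Proof.
have := dotv_lincomb k 0 u u; rewrite scale0r addr0 expr0n /= !mulr0 !mul0r !addr0.
by rewrite /norm2 => ->; rewrite sqrtrM ?sqr_ge0 // sqrtr_sqr.
Qed.

Lemma norm2N u : norm2 (- u) = norm2 u.
Proof. by rewrite -scaleN1r norm2Z normrN normr1 mul1r. Qed.

Lemma norm2_unitv_le1 u : norm2 (unitv u) <= 1.
Proof.
rewrite /unitv norm2Z ger0_norm ?invr_ge0 ?norm2_ge0 //.
have [->|u0] := eqVneq (norm2 u) 0; first by rewrite mulr0.
by rewrite mulVf.
Qed.

Lemma norm2_sum_le (I : Type) (s : seq I) (P : pred I) (F : I -> 'rV[R]_d) :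
  norm2 (\sum_(i <- s | P i) F i) <= \sum_(i <- s | P i) norm2 (F i).
Proof.
elim: s => [|x s IH]; first by rewrite !big_nil norm20.
rewrite !big_cons; case: (P x) => //.
by apply: le_trans (norm2D_le _ _) _; rewrite lerD2l.
Qed.

Lemma norm2_sum_unitv_le (s : seq 'rV[R]_d) (P : pred 'rV[R]_d) :
  norm2 (\sum_(v <- s | P v) unitv v) <= (count P s)%:R.
Proof.
apply: le_trans (norm2_sum_le _ _ _ _) _; rewrite -sum1_count natr_sum.
by apply: ler_sum => v _; apply: norm2_unitv_le1.
Qed.

Lemma norm2_mean_le T (F : 'I_T -> 'rV[R]_d) e :
  (0 < T)%N -> (forall t, norm2 (F t) <= e) ->
  norm2 (T%:R^-1 *: \sum_(t < T) F t) <= e.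
Proof.
move=> T0 Fe; have T0R : 0 < T%:R :> R by rewrite ltr0n.
rewrite norm2Z ger0_norm ?invr_ge0 ?ler0n // ler_pdivrMl //.
apply: le_trans (norm2_sum_le _ _ _ _) _.
apply: le_trans (ler_sum _ (fun t _ => Fe t)) _.
by rewrite sumr_const card_ord mulr_natl.
Qed.

Lemma norm2_mean_shift_le (z B : 'rV[R]_d) (k m : R) :
  1 <= m -> m <= k -> norm2 z <= 1 -> norm2 B <= k ->
  norm2 ((1 + k)^-1 *: (z + B) - k^-1 *: B) <= 2 / m.
Proof.
move=> m1 mk z1 Bk.
have k0 : 0 < k by lra.
have k10 : 0 < 1 + k by lra.
have shrink : 0 <= k^-1 - (1 + k)^-1 by rewrite subr_ge0 lef_pV2 ?posrE //; lra.
rewrite scalerDr -addrA -scalerBl.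
apply: le_trans (norm2D_le _ _) _; rewrite !norm2Z.
rewrite ger0_norm ?invr_ge0 ?(ltW k10) // -opprB normrN ger0_norm //.
have -> : 2 / m = (1 + k)^-1 * 1 + (k^-1 - (1 + k)^-1) * k + (2 / m - 2 / (1 + k)).
  by field; rewrite !gt_eqF //; lra.
rewrite -addrA lerD ?ler_wpM2l ?invr_ge0 ?(ltW k10) //.
rewrite -[leLHS]addr0 lerD ?ler_wpM2l // subr_ge0 ler_pM2l // lef_pV2 ?posrE //; lra.
Qed.

End EuclideanNorm.

Section CenterVector.
Context {R : rcfType} {d : nat}.
Implicit Types (a : seq 'rV[R]_d) (v w x g : 'rV[R]_d).

Definition in_S x v := dotv (unitv v) x <= 0.
Definition in_P g v := 0 <= dotv (unitv v) g.

Definition cvec_at a x g : 'rV[R]_d :=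
  (count (in_S x) a)%:R^-1 *: \sum_(v <- a | in_P g v && in_S x v) unitv v.

Lemma card_Sset a x : #|Sset a x| = count (in_S x) a.
Proof.
rewrite -sum1_count (big_nth 0) big_mkord -sum1_card.
by apply: eq_bigl => i; rewrite inE.
Qed.

Lemma cvecE a T (xs : 'I_T -> 'rV[R]_d) g :
  cvec a xs g = T%:R^-1 *: \sum_(t < T) cvec_at a (xs t) g.
Proof.
rewrite /cvec /lambar.
under eq_bigr => i _ do rewrite -scalerA scaler_suml.
rewrite -scaler_sumr exchange_big /=; congr (_ *: _); apply: eq_bigr => t _.
rewrite /cvec_at (big_nth 0) big_mkord big_mkcondr scaler_sumr /=.
apply: eq_big => [i|i _]; first by rewrite inE.
rewrite -card_Sset /Sset inE /in_S /vec.
by case: ifP => _; rewrite ?mul1r ?mul0r ?scale0r ?scaler0 // mulrC.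
Qed.

Lemma cvec_perm {T} (xs : 'I_T -> 'rV[R]_d) g {a b} :
  perm_eq a b -> cvec a xs g = cvec b xs g.
Proof.
move=> ab; rewrite !cvecE /cvec_at; congr (_ *: _); apply: eq_bigr => t _.
by rewrite (permP ab) (perm_big _ ab).
Qed.

Lemma norm2_cvec_at_cons_le w a x g (m : nat) :
  (0 < m <= count (in_S x) a)%N ->
  norm2 (cvec_at (w :: a) x g - cvec_at a x g) <= 2 / m%:R.
Proof.
move=> /andP[m0 mk]; rewrite /cvec_at /= big_cons.
case: (in_S x w); last by rewrite andbF subrr norm20 divr_ge0 ?ler0n.
rewrite andbT add1n -natr1 [_ + 1]addrC.
set B := \sum_(v <- a | _) _.
have -> : (if in_P g w then unitv w + B else B) = (if in_P g w then unitv w else 0) + B.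
  by case: (in_P g w); rewrite ?add0r.
apply: norm2_mean_shift_le.
- by rewrite ler1n.
- by rewrite ler_nat.
- by case: (in_P g w); rewrite ?norm20 ?norm2_unitv_le1.
- by apply: le_trans (norm2_sum_unitv_le _ _) _; rewrite ler_nat sub_count // => v /andP[].
Qed.

Lemma norm2_cvec_cons_le w a T (xs : 'I_T -> 'rV[R]_d) g (m : nat) :
  (0 < T)%N -> (0 < m)%N -> (forall t, m <= count (in_S (xs t)) a)%N ->
  norm2 (cvec (w :: a) xs g - cvec a xs g) <= 2 / m%:R.
Proof.
move=> T0 m0 ma; rewrite !cvecE -scalerBr -sumrB.
by apply: norm2_mean_le => // t; apply: norm2_cvec_at_cons_le; rewrite m0 ma.
Qed.

End CenterVector.

Lemma neighbor_perm (R : rcfType) (d : nat) (a a' : seq 'rV[R]_d) :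
  neighbor a a' -> exists w, perm_eq a' (w :: a) \/ perm_eq a (w :: a').
Proof.
case=> [[k [w [_ ->]]] | [k ka ->]].
  by exists w; left; rewrite (perm_catCA (take k a) [:: w]) /= cat_take_drop.
exists (nth 0 a k); right.
rewrite -[X in perm_eq X](cat_take_drop k a) (drop_nth 0 ka).
by rewrite (perm_catCA (take k a) [:: _]).
Qed.

Theorem claim3p5 (R : rcfType) (d : nat) (a a' : seq 'rV[R]_d) (T : nat)
  (xs : 'I_T -> 'rV[R]_d) (g : 'rV[R]_d) (m : nat) :
  (1 <= T)%N ->
  all (fun v => v != 0) a ->
  neighbor a a' ->
  (forall t, (1 <= #|Sset a (xs t)|)%N) ->
  (forall t, (1 <= #|Sset a' (xs t)|)%N) ->
  (* m = min_t min(m^(t), m'^(t)) *)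
  (exists t, m = minn #|Sset a (xs t)| #|Sset a' (xs t)|) ->
  (forall t, (m <= minn #|Sset a (xs t)| #|Sset a' (xs t)|)%N) ->
  norm2 (cvec a xs g - cvec a' xs g) <= 2 / m%:R.
Proof.
move=> T0 _ /neighbor_perm[w aa'] Sa Sa' [t0 ->] m_min.
set m0 := minn _ _ in m_min *.
have m0_gt0 : (0 < m0)%N by rewrite leq_min Sa Sa'.
have m0a t : (m0 <= count (in_S (xs t)) a)%N.
  by rewrite -card_Sset (leq_trans (m_min t)) ?geq_minl.
have m0a' t : (m0 <= count (in_S (xs t)) a')%N.
  by rewrite -card_Sset (leq_trans (m_min t)) ?geq_minr.
case: aa' => [a'_wa | a_wa'].
  by rewrite (cvec_perm xs g a'_wa) -opprB norm2N norm2_cvec_cons_le.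
by rewrite (cvec_perm xs g a_wa') norm2_cvec_cons_le.
Qed.
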